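(* Let $\mathbf C=\{C_t\}_{t\in[0,1]}$ and $\mathbf C'=\{C'_t\}_{t\in[0,1]}$ be two families of bivariate copulas such that $C_t\preceq C'_t$ for every $t\in[0,1]$. Then for all bivariate copulas $A$ and $B$, $A\star_{\mathbf C}B\preceq A\star_{\mathbf C'}B$ (concordance order of $3$-copulas).
   Context: A bivariate copula is a map $C:[0,1]^2\to[0,1]$ with $C(u,0)=C(0,u)=0$, $C(u,1)=C(1,u)=u$, and $2$-increasing. For bivariate copulas $C,C'$, $C\preceq C'$ means $C(u_1,u_2)\le C'(u_1,u_2)$ for all $(u_1,u_2)\in[0,1]^2$. For $3$-copulas $D,D'$ (distribution functions on $[0,1]^3$ with uniform $[0,1]$ one-dimensional marginals), $D\preceq D'$ means $D(\mathbf u)\le D'(\mathbf u)$ and $\overline D(\mathbf u)\le\overline{D'}(\mathbf u)$ for all $\mathbf u\in[0,1]^3$, where $\overline D(u_1,u_2,u_3)=1-u_1-u_2-u_3+D(u_1,u_2,1)+D(u_1,1,u_3)+D(1,u_2,u_3)-D(u_1,u_2,u_3)$. For bivariate copulas $A,B$ and a family $\mathbf C=\{C_t\}$ of bivariate copulas, $(A\star_{\mathbf C} B)(u_1,u_2,u_3)=\int_{0}^{u_2} C_t\!\left(\tfrac{\partial}{\partial t} A(u_1,t),\tfrac{\partial}{\partial t} B(t,u_3)\right) dt$ (partial derivatives existing a.e.); this is a $3$-copula. *)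

From mathcomp Require Import all_boot all_order all_algebra.
From mathcomp Require Import all_classical all_reals all_analysis.
Set Implicit Arguments. Unset Strict Implicit. Unset Printing Implicit Defensive.
Import Order.TTheory GRing.Theory Num.Theory.
Local Open Scope classical_set_scope.
Local Open Scope ring_scope.

Section Copulas.
Variable R : realType.

Definition unitI : set R := `[0, 1]%classic.

Definition is_copula2 (C : R -> R -> R) : Prop :=
  (forall u, 0 <= u <= 1 -> C u 0 = 0 /\ C 0 u = 0 /\ C u 1 = u /\ C 1 u = u) /\
  (forall u1 u2 v1 v2, 0 <= u1 -> u1 <= u2 -> u2 <= 1 ->
     0 <= v1 -> v1 <= v2 -> v2 <= 1 ->
     C u2 v2 - C u2 v1 - C u1 v2 + C u1 v1 >= 0).

Definition copula2_le (C C' : R -> R -> R) : Prop :=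
  forall u1 u2, 0 <= u1 <= 1 -> 0 <= u2 <= 1 -> C u1 u2 <= C' u1 u2.

Definition survival3 (D : R -> R -> R -> R) (u1 u2 u3 : R) : R :=
  1 - u1 - u2 - u3 + D u1 u2 1 + D u1 1 u3 + D 1 u2 u3 - D u1 u2 u3.

Definition copula3_le (D D' : R -> R -> R -> R) : Prop :=
  forall u1 u2 u3, 0 <= u1 <= 1 -> 0 <= u2 <= 1 -> 0 <= u3 <= 1 ->
    D u1 u2 u3 <= D' u1 u2 u3 /\ survival3 D u1 u2 u3 <= survival3 D' u1 u2 u3.

(* partial derivatives (defined a.e.; derive1 returns the limit of the
   difference quotient, an arbitrary value where it does not exist) *)
Definition d2 (A : R -> R -> R) (u1 t : R) : R := derive1 (fun s => A u1 s) t.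
Definition d1 (B : R -> R -> R) (t u3 : R) : R := derive1 (fun s => B s u3) t.

Definition star_prod (C : R -> R -> R -> R) (A B : R -> R -> R)
  (u1 u2 u3 : R) : R :=
  fine (\int[@lebesgue_measure R]_(t in `[0%R, u2]%classic) (C t (d2 A u1 t) (d1 B t u3))%:E)%E.

End Copulas.

From mathcomp Require Import all_boot all_order all_algebra.
From mathcomp Require Import all_classical all_reals all_analysis.
From mathcomp Require Import measurable_realfun ring lra.
Import Order.TTheory GRing.Theory Num.Theory numFieldNormedType.Exports.
Set Implicit Arguments. Unset Strict Implicit. Unset Printing Implicit Defensive.
Local Open Scope classical_set_scope.
Local Open Scope ring_scope.

(** The partial derivatives [t |-> d_t A(u1,t)] and [t |-> d_t B(t,u3)] are
    derivatives of nondecreasing 1-Lipschitz functions, so they take values in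
    [0,1] (also where they do not exist, [derive1] being 0 there); hence
    [C_t(d2 A, d1 B) <= C'_t(d2 A, d1 B)] pointwise and the integrals compare.
    For the survival functions, [D(u1,u2,1)] and [D(1,u2,u3)] do not depend on
    the family: [d_t B(t,1)] and [d_t A(1,t)] are derivatives of the identity,
    hence 0 or 1, where every copula takes the value 0 or its other argument.
    What remains, [D(u1,1,u3) - D(u1,u2,u3)], is an integral over [(u2,1]] and
    compares as before.

    The derivative of a
    nondecreasing 1-Lipschitz function is Borel: it is determined by the
    difference quotients along [t +- 1/(n+1)], since monotonicity and the
    Lipschitz bound control the quotients between consecutive [1/n].  A family
    of copulas that is measurable in [t] is then jointly measurable by
    Lipschitz continuity in the copula arguments, approximating them on a grid. *)

Section copula2_theory.
Variables (R : realType) (C : R -> R -> R).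
Hypothesis hC : is_copula2 C.

Lemma copula2_incr_r x y y' : 0 <= x <= 1 -> 0 <= y -> y <= y' -> y' <= 1 ->
  0 <= C x y' - C x y <= y' - y.
Proof.
move: hC => [hb h2] /andP[x0 x1] y0 yy' y'1.
have y'0 : 0 <= y' := le_trans y0 yy'.
have [_ [Cy0 [_ Cy1]]] := hb y (ltac:(by rewrite y0 (le_trans yy' y'1))).
have [_ [Cy'0 [_ Cy'1]]] := hb y' (ltac:(by rewrite y'0 y'1)).
have := h2 0 x y y' (lexx 0) x0 x1 y0 yy' y'1.
have := h2 x 1 y y' x0 x1 (lexx 1) y0 yy' y'1.
rewrite Cy0 Cy1 Cy'0 Cy'1 => *; apply/andP; split; lra.
Qed.

Lemma copula2_incr_l x x' y : 0 <= y <= 1 -> 0 <= x -> x <= x' -> x' <= 1 ->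
  0 <= C x' y - C x y <= x' - x.
Proof.
move: hC => [hb h2] /andP[y0 y1] x0 xx' x'1.
have x'0 : 0 <= x' := le_trans x0 xx'.
have [Cx0 [_ [Cx1 _]]] := hb x (ltac:(by rewrite x0 (le_trans xx' x'1))).
have [Cx'0 [_ [Cx'1 _]]] := hb x' (ltac:(by rewrite x'0 x'1)).
have := h2 x x' 0 y x0 xx' x'1 (lexx 0) y0 y1.
have := h2 x x' y 1 x0 xx' x'1 y0 y1 (lexx 1).
rewrite Cx0 Cx1 Cx'0 Cx'1 => *; apply/andP; split; lra.
Qed.

Lemma copula2_ge0_le1 x y : 0 <= x <= 1 -> 0 <= y <= 1 -> 0 <= C x y <= 1.
Proof.
move=> x01 /andP[y0 y1]; have [Cx0 [_ [Cx1 _]]] := hC.1 x x01.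
have := copula2_incr_r x01 (lexx 0) y0 y1.
have := copula2_incr_r x01 y0 y1 (lexx 1).
rewrite Cx0 Cx1; case/andP: x01 => *; apply/andP; split; lra.
Qed.

Lemma copula2_lipschitz x y x' y' : 0 <= x <= 1 -> 0 <= y <= 1 ->
  0 <= x' <= 1 -> 0 <= y' <= 1 -> `|C x y - C x' y'| <= `|x - x'| + `|y - y'|.
Proof.
move=> /andP[x0 x1] y01 x'01 /andP[y'0 y'1].
have dx : `|C x y - C x' y| <= `|x - x'|.
  case/andP: x'01 => x'0 x'1; have [xx'|/ltW x'x] := leP x x'.
    have /andP[? ?] := copula2_incr_l y01 x0 xx' x'1.
    by rewrite distrC (distrC x) !ger0_norm // subr_ge0.
  have /andP[? ?] := copula2_incr_l y01 x'0 x'x x1.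
  by rewrite !ger0_norm // subr_ge0.
have dy : `|C x' y - C x' y'| <= `|y - y'|.
  case/andP: y01 => y0 y1; have [yy'|/ltW y'y] := leP y y'.
    have /andP[? ?] := copula2_incr_r x'01 y0 yy' y'1.
    by rewrite distrC (distrC y) !ger0_norm // subr_ge0.
  have /andP[? ?] := copula2_incr_r x'01 y'0 y'y y1.
  by rewrite !ger0_norm // subr_ge0.
exact: le_trans (ler_distD (C x' y) _ _) (lerD dx dy).
Qed.

Lemma copula2_r01 x v : 0 <= x <= 1 -> v = 0 \/ v = 1 -> C x v = x * v.
Proof. by move=> /hC.1[C0 [_ [C1 _]]] [->|->]; rewrite ?C0 ?C1 ?mulr0 ?mulr1. Qed.

Lemma copula2_l01 v y : 0 <= y <= 1 -> v = 0 \/ v = 1 -> C v y = v * y.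
Proof. by move=> /hC.1[_ [C0 [_ C1]]] [->|->]; rewrite ?C0 ?C1 ?mul0r ?mul1r. Qed.

End copula2_theory.

Section difference_quotient.
Variable R : realType.
Implicit Types (f : R -> R) (t h : R).

Definition diffq f t h := h^-1 * (f (h + t) - f t).

Lemma diffq_shift f t h : diffq f t h = diffq f (h + t) (- h).
Proof. by rewrite /diffq invrN addKr; ring. Qed.

Lemma diffq_ge0_le1 f t h : 0 < h -> 0 <= f (h + t) - f t <= h ->
  0 <= diffq f t h <= 1.
Proof.
move=> h0 /andP[df0 dfh]; have hV0 : 0 <= h^-1 by rewrite invr_ge0 ltW.
rewrite /diffq mulr_ge0 //= -(mulVf (lt0r_neq0 h0)); exact: ler_wpM2l.
Qed.

Lemma derivable1_diffq f t : derivable f t 1 <-> cvg (diffq f t @ 0^').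
Proof.
rewrite /derivable.
suff -> : (fun h : R => h^-1 *: ((f \o shift t) (h *: 1) - f t)) = diffq f t by [].
by apply/funext => h; rewrite /diffq /= -[h *: 1]/(h * 1) mulr1.
Qed.

Lemma derive1_dvg f t : ~ derivable f t 1 -> derive1 f t = 0.
Proof. by move=> ndf; rewrite derive1E /derive dvgP. Qed.

Lemma diffq_cvg_derive1 f t : derivable f t 1 -> diffq f t @ 0^' --> derive1 f t.
Proof. by rewrite derivable1_diffq. Qed.

Lemma derive1_diffq_cvg f t L : diffq f t @ 0^' --> L ->
  derivable f t 1 /\ derive1 f t = L.
Proof.
move=> dfL; have df : derivable f t 1 by rewrite derivable1_diffq; exact: cvgP dfL.
by split=> //; apply: cvg_lim.
Qed.

Lemma derive1_in_closed f t (S : set R) : closed S -> S 0 ->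
  (\forall h \near 0^'+, S (diffq f t h)) \/ (\forall h \near 0^'-, S (diffq f t h)) ->
  S (derive1 f t).
Proof.
move=> cS S0 nearS; have [df|ndf] := pselect (derivable f t 1); last by rewrite derive1_dvg.
have dfL := diffq_cvg_derive1 df.
case: nearS => nearS; apply: (closed_cvg _ cS nearS).
- exact: cvg_dnbhs_at_right.
- exact: cvg_dnbhs_at_left.
Qed.

End difference_quotient.

Section nondecr_lip1.
Variable R : realType.
Implicit Types (G : R -> R) (t h : R).

Definition nondecr_lip1 G := forall s u, s <= u -> 0 <= G u - G s <= u - s.

Definition mirror G s := - G (- s).

Definition harmonic_diffq G t (n : nat) := diffq G t n.+1%:R^-1.

Lemma nondecr_lip1_mirror G : nondecr_lip1 G -> nondecr_lip1 (mirror G).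
Proof.
move=> hG s u su; have /andP[] := hG (- u) (- s) (ltac:(by rewrite lerN2)).
by rewrite /mirror => *; apply/andP; split; lra.
Qed.

Lemma diffq_mirror G t h : diffq (mirror G) (- t) h = diffq G t (- h).
Proof. by rewrite /diffq /mirror invrN !opprD !opprK; ring. Qed.

Section right_derivative.
Variable G : R -> R.
Hypothesis hG : nondecr_lip1 G.

Lemma nondecr_lip1_diffq t h : 0 < h -> 0 <= diffq G t h <= 1.
Proof.
move=> h0; apply: diffq_ge0_le1 => //.
by have := @hG t (h + t) (ltac:(by rewrite lerDr ltW)); rewrite addrK.
Qed.

Lemma diffq_dist t h x : 0 < h -> h <= x ->
  `|diffq G t h - diffq G t x| <= 2 * (1 - h / x).
Proof.
move=> h0 hx; have x0 : 0 < x := lt_le_trans h0 hx.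
have /andP[A0 Ah] := @hG t (h + t) (ltac:(by rewrite lerDr ltW)).
rewrite addrK in Ah.
have /andP[B0 Bh] := @hG (h + t) (x + t) (ltac:(by rewrite lerD2r)).
rewrite (_ : x + t - (h + t) = x - h) in Bh; last by ring.
set A := G (h + t) - G t in A0 Ah *; set B := G (x + t) - G (h + t) in B0 Bh *.
have hV : h * h^-1 = 1 by rewrite mulfV // lt0r_neq0.
have xV : x * x^-1 = 1 by rewrite mulfV // lt0r_neq0.
have xVhV : x^-1 <= h^-1 by rewrite lef_pV2 // posrE.
have xV0 : 0 <= x^-1 by rewrite invr_ge0 ltW.
have -> : diffq G t h - diffq G t x = A * (h^-1 - x^-1) - x^-1 * B.
  by rewrite /diffq /A /B; ring.
have A1 : A * (h^-1 - x^-1) <= 1 - h / x.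
  apply: (le_trans (ler_wpM2r _ Ah)); first by rewrite subr_ge0.
  by rewrite mulrBr hV.
have B1 : x^-1 * B <= 1 - h / x.
  apply: (le_trans (ler_wpM2l xV0 Bh)).
  by rewrite mulrBr mulrC xV mulrC.
have A2 : 0 <= A * (h^-1 - x^-1) by rewrite mulr_ge0 // subr_ge0.
have B2 : 0 <= x^-1 * B by rewrite mulr_ge0.
rewrite ler_norml; apply/andP; split; lra.
Qed.

Lemma harmonic_diffq_cvg_at_right t (L : R) :
  harmonic_diffq G t @ \oo --> L -> diffq G t @ (0 : R)^'+ --> L.
Proof.
move=> /cvgrPdist_lt aL; apply/cvgrPdist_lt => e e0.
have [N _ hN] := aL (e / 2) (ltac:(by rewrite divr_gt0)).
near=> h.
have h0 : 0 < h by near: h; exact: nbhs_right_gt.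
have hN1 : h < N.+1%:R^-1 by near: h; apply: nbhs_right_lt; rewrite invr_gt0.
have he : h < e / 4 by near: h; apply: nbhs_right_lt; rewrite divr_gt0.
have hV0 : 0 <= h^-1 by rewrite invr_ge0 ltW.
(* [1/(k+1) < h <= 1/k]: compare [diffq G t h] with the term of index [k-1]. *)
have /andP[kh hk] := truncn_itv hV0; set k := Num.truncn h^-1 in kh hk.
have Nk : (N < k)%N.
  by rewrite truncn_gt_nat ltW // -(invrK N.+1%:R) ltf_pV2 // ?posrE ?invr_gt0.
have k0n : (0 < k)%N := leq_ltn_trans (leq0n N) Nk.
have k0 : 0 < k%:R :> R by rewrite ltr0n.
have hkV : h <= k%:R^-1 by rewrite -(invrK h) lef_pV2 ?posrE ?invr_gt0.
have hk1 : 1 - h / k%:R^-1 < h.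
  rewrite invrK; move: hk; rewrite -(ltr_pM2l h0) mulfV ?lt0r_neq0 // mulrSr; lra.
have Nk1 : (N <= k.-1)%N by rewrite -ltnS prednK.
have := hN k.-1 Nk1; rewrite /= /harmonic_diffq prednK // => Lk.
have := diffq_dist t h0 hkV.
have := ler_distD (diffq G t k%:R^-1) L (diffq G t h).
rewrite (distrC (diffq G t k%:R^-1) (diffq G t h)); lra.
Unshelve. all: by end_near.
Qed.

End right_derivative.

Lemma derivable_harmonic_diffq G t (L : R) : nondecr_lip1 G ->
  harmonic_diffq G t @ \oo --> L -> harmonic_diffq (mirror G) (- t) @ \oo --> L ->
  derivable G t 1 /\ derive1 G t = L.
Proof.
move=> hG rL lL; apply: derive1_diffq_cvg; apply: (@cvg_at_right_left_dnbhs _ R^o).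
  exact: harmonic_diffq_cvg_at_right.
apply/cvg_at_leftNP; rewrite oppr0.
have -> : diffq G t \o -%R = diffq (mirror G) (- t).
  by apply/funext => h /=; rewrite diffq_mirror.
exact: harmonic_diffq_cvg_at_right (nondecr_lip1_mirror hG) _ _ lL.
Qed.

Lemma harmonic_diffq_cvg G t : derivable G t 1 ->
  harmonic_diffq G t @ \oo --> derive1 G t /\
  harmonic_diffq (mirror G) (- t) @ \oo --> derive1 G t.
Proof.
move=> /diffq_cvg_derive1 /cvgr_dnbhsP dG; split.
  apply: dG; split; last exact: cvg_harmonic.
  by move=> n; rewrite invr_eq0 pnatr_eq0.
have -> : harmonic_diffq (mirror G) (- t) = (fun n => diffq G t (- n.+1%:R^-1)).
  by apply/funext => n; rewrite /harmonic_diffq diffq_mirror.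
apply: dG; split; first by move=> n; rewrite oppr_eq0 invr_eq0 pnatr_eq0.
by rewrite -oppr0; apply: cvgN; exact: cvg_harmonic.
Qed.

End nondecr_lip1.

Section measurable_derive1.
Variable R : realType.
Implicit Types (u : R^nat) (G : R -> R) (t : R).

(* [liminf u == limsup u], phrased with [limn_sup] only, for which measurability
   is available. *)
Definition cvgn_test u := limn_sup u == - limn_sup (fun n => - u n).

Lemma bounded_fun_norm_le1 u : (forall n, `|u n| <= 1) -> bounded_fun u.
Proof. by move=> u1; exists 1; split=> // M M1 n _; exact: le_trans (u1 n) (ltW M1). Qed.

Lemma cvgn_testP u : (forall n, `|u n| <= 1) ->
  reflect (u @ \oo --> limn_sup u) (cvgn_test u).
Proof.
move=> u1; have bu := bounded_fun_norm_le1 u1.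
have bNu : bounded_fun (fun n => - u n).
  by apply: bounded_fun_norm_le1 => n; rewrite normrN.
apply: (iffP eqP) => [E|uL]; last first.
  by have [_ ->] := cvg_limn_inf_sup (cvgN uL); rewrite opprK.
have supsL : sups u @ \oo --> limn_sup u.
  rewrite limn_supE //; apply: cvg_sups_inf;
    [exact: bounded_fun_has_ubound|exact: bounded_fun_has_lbound].
have infsL : infs u @ \oo --> limn_sup u.
  have -> : infs u = (fun n => - sups (fun k => - u k) n).
    by apply/funext => n; rewrite (supsN u) /= opprK.
  rewrite E; apply: cvgN; rewrite limn_supE //; apply: cvg_sups_inf;
    [exact: bounded_fun_has_ubound|exact: bounded_fun_has_lbound].
apply: (squeeze_cvgr _ infsL supsL); apply: nearW => n; apply/andP; split.
- apply: ge_inf; last by exists n => /=.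
  by apply/has_lbound_sdrop/bounded_fun_has_lbound.
- apply: ub_le_sup; last by exists n => /=.
  by apply/has_ubound_sdrop/bounded_fun_has_ubound.
Qed.

(* The default 0 matches the junk value of [derive1] where [G] is not derivable. *)
Definition derive_seq G t :=
  let r := harmonic_diffq G t in let l := harmonic_diffq (mirror G) (- t) in
  if [&& cvgn_test r, cvgn_test l & limn_sup r == limn_sup l] then limn_sup r else 0.

Lemma harmonic_diffq_norm_le1 G t n : nondecr_lip1 G -> `|harmonic_diffq G t n| <= 1.
Proof.
move=> hG; have n0 : 0 < n.+1%:R^-1 :> R by rewrite invr_gt0.
by have /andP[? ?] := nondecr_lip1_diffq hG t n0; rewrite ger0_norm.
Qed.

Lemma derive1_seqE G : nondecr_lip1 G -> derive1 G =1 derive_seq G.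
Proof.
move=> hG t; have hGm := nondecr_lip1_mirror hG.
have r1 := harmonic_diffq_norm_le1 t ^~ hG.
have l1 := harmonic_diffq_norm_le1 (- t) ^~ hGm.
rewrite /derive_seq /=.
set r := harmonic_diffq G t in r1 *; set l := harmonic_diffq _ _ in l1 *.
have [df|ndf] := pselect (derivable G t 1).
  have [rD lD] := harmonic_diffq_cvg df.
  have [_ rE] := cvg_limn_inf_sup rD; have [_ lE] := cvg_limn_inf_sup lD.
  have /(cvgn_testP r1) -> : r @ \oo --> limn_sup r by rewrite rE.
  have /(cvgn_testP l1) -> : l @ \oo --> limn_sup l by rewrite lE.
  by rewrite rE lE eqxx.
rewrite derive1_dvg //; case: ifPn => //.
move=> /and3P[/(cvgn_testP r1) rL /(cvgn_testP l1) lL /eqP E].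
by case: ndf; rewrite E in rL; exact: (derivable_harmonic_diffq hG rL lL).1.
Qed.

Lemma measurable_harmonic_diffq G n : nondecr_lip1 G ->
  measurable_fun setT (fun t => harmonic_diffq G t n).
Proof.
move=> hG; have homoG : {homo G : x y / x <= y}.
  by move=> x y /hG /andP[]; rewrite subr_ge0.
apply: measurable_funM; first exact: measurable_cst.
apply: measurable_funB; last exact: nondecreasing_measurable.
by apply: nondecreasing_measurable => // x y xy; rewrite homoG // lerD2l.
Qed.

Lemma measurable_harmonic_diffq_mirror G n : nondecr_lip1 G ->
  measurable_fun setT (fun t => harmonic_diffq (mirror G) (- t) n).
Proof.
move=> hG; apply: (measurableT_comp (f := fun s => harmonic_diffq (mirror G) s n)).
  exact: measurable_harmonic_diffq (nondecr_lip1_mirror hG).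
by apply: measurable_funN; exact: measurable_id.
Qed.

Lemma measurable_limn_sup_le1 (h : (R -> R)^nat) :
  (forall n, measurable_fun setT (h n)) -> (forall t n, `|h n t| <= 1) ->
  measurable_fun setT (fun t => limn_sup (h ^~ t)).
Proof.
move=> mh h1; apply: measurable_fun_limn_sup => // t _.
  by apply/bounded_fun_has_ubound/bounded_fun_norm_le1.
by apply/bounded_fun_has_lbound/bounded_fun_norm_le1.
Qed.

Lemma measurable_cvgn_test (h : (R -> R)^nat) :
  (forall n, measurable_fun setT (h n)) -> (forall t n, `|h n t| <= 1) ->
  measurable_fun setT (fun t => cvgn_test (h ^~ t)).
Proof.
move=> mh h1; apply: measurable_fun_eqr; first exact: measurable_limn_sup_le1.
apply: measurable_funN; apply: (measurable_limn_sup_le1 (h := fun n t => - h n t)).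
- by move=> n; exact: measurable_funN.
- by move=> t n; rewrite normrN.
Qed.

Lemma measurable_derive_seq G : nondecr_lip1 G -> measurable_fun setT (derive_seq G).
Proof.
move=> hG; have mr n := measurable_harmonic_diffq n hG.
have ml n := measurable_harmonic_diffq_mirror n hG.
have r1 t n := harmonic_diffq_norm_le1 t n hG.
have l1 t n := harmonic_diffq_norm_le1 (- t) n (nondecr_lip1_mirror hG).
apply: measurable_fun_ifT; last exact: measurable_cst.
  apply: measurable_and; first exact: measurable_cvgn_test mr r1.
  apply: measurable_and; first exact: measurable_cvgn_test ml l1.
  by apply: measurable_fun_eqr; exact: measurable_limn_sup_le1.
exact: measurable_limn_sup_le1 mr r1.
Qed.

End measurable_derive1.

Section unit_interval.
Variable R : realType.
Implicit Types (g : R -> R) (s u t h : R).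

Definition nondecr_lip1_01 g :=
  forall s u, 0 <= s -> s <= u -> u <= 1 -> 0 <= g u - g s <= u - s.

Definition clamp01 s : R := if s < 0 then 0 else if 1 < s then 1 else s.

Lemma clamp01_ge0_le1 s : 0 <= clamp01 s <= 1.
Proof. by rewrite /clamp01; case: ltP => ?; [lra|case: ltP => ?; lra]. Qed.

Lemma clamp01_id s : 0 <= s <= 1 -> clamp01 s = s.
Proof. by move=> /andP[? ?]; rewrite /clamp01; case: ltP => ?; [lra|case: ltP => ?; lra]. Qed.

Lemma nondecr_lip1_clamp01 : nondecr_lip1 clamp01.
Proof.
move=> s u su; rewrite /clamp01; case: (ltP s 0) => ?; case: (ltP u 0) => ?;
  try case: (ltP 1 s) => ?; try case: (ltP 1 u) => ?; apply/andP; split; lra.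
Qed.

Lemma nondecr_lip1_comp_clamp01 g : nondecr_lip1_01 g -> nondecr_lip1 (g \o clamp01).
Proof.
move=> hg s u su; have /andP[c0 c1] := nondecr_lip1_clamp01 su.
have /andP[s0 _] := clamp01_ge0_le1 s; have /andP[_ u1] := clamp01_ge0_le1 u.
have cs : clamp01 s <= clamp01 u by rewrite -subr_ge0.
have /andP[? ?] := hg _ _ s0 cs u1.
by apply/andP; split => //=; lra.
Qed.

Lemma derive1_clamp01 g t : 0 < t < 1 -> derive1 g t = derive1 (g \o clamp01) t.
Proof.
move=> /andP[t0 t1]; rewrite !derive1E; apply: near_eq_derive; near=> s.
rewrite /= clamp01_id //; apply/andP; split; apply: ltW.
  by near: s; exact: lt_nbhsr.
by near: s; exact: lt_nbhsl.
Unshelve. all: by end_near.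
Qed.

Lemma derive1_in_closed_01 g t (S : set R) : closed S -> S 0 -> 0 <= t <= 1 ->
  (forall h, h != 0 -> 0 <= h + t <= 1 -> S (diffq g t h)) -> S (derive1 g t).
Proof.
move=> cS S0 /andP[t0 t1] gS; apply: derive1_in_closed => //.
have [t_lt1|t_ge1] := ltP t 1; [left|right]; near=> h; apply: gS.
- by rewrite gt_eqF //; near: h; exact: nbhs_right_gt.
- have h0 : 0 < h by near: h; exact: nbhs_right_gt.
  have h1 : h <= 1 - t by near: h; apply: nbhs_right_le; rewrite subr_gt0.
  apply/andP; split; lra.
- by rewrite lt_eqF //; near: h; exact: nbhs_left_lt.
- have h0 : h < 0 by near: h; exact: nbhs_left_lt.
  have h1 : - t <= h by near: h; apply: nbhs_left_ge; rewrite oppr_lt0; lra.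
  apply/andP; split; lra.
Unshelve. all: by end_near.
Qed.

Lemma derive1_ge0_le1 g t : nondecr_lip1_01 g -> 0 <= t <= 1 ->
  0 <= derive1 g t <= 1.
Proof.
move=> hg t01; have : [set` `[0, 1]] (derive1 g t); last by rewrite /= in_itv.
apply: derive1_in_closed_01 => //; first exact: interval_closed.
  by rewrite /= in_itv /= lexx ler01.
move=> h h0 /andP[ht0 ht1]; rewrite /= in_itv /=; case/andP: t01 => t0 t1.
have [hgt0|hlt0] := ltP 0 h.
  apply: diffq_ge0_le1 => //.
  by have := hg t (h + t) t0 (ltac:(by rewrite lerDr ltW)) ht1; rewrite addrK.
have {hlt0 h0} hlt0 : h < 0 by rewrite lt_neqAle h0.
rewrite diffq_shift; apply: diffq_ge0_le1; first by rewrite oppr_gt0.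
have := hg (h + t) t ht0 (ltac:(by rewrite gerDr ltW)) t1.
by rewrite addKr (_ : t - (h + t) = - h) //; ring.
Qed.

Lemma derive1_id_01 g t : (forall s, 0 <= s <= 1 -> g s = s) -> 0 <= t <= 1 ->
  derive1 g t = 0 \/ derive1 g t = 1.
Proof.
move=> gid t01; apply: (@derive1_in_closed_01 _ _ [set 0; 1]) => //.
- by apply: closedU; exact: closed_eq.
- by left.
move=> h h0 ht01; right => /=.
by rewrite /diffq !gid ?addrK ?mulVf //; case/andP: t01 => ? ?; apply/andP; split.
Qed.

Lemma measurable_derive1_01 g : nondecr_lip1_01 g ->
  measurable_fun (`[0, 1] : set R) (derive1 g).
Proof.
move=> hg; have hG := nondecr_lip1_comp_clamp01 hg.
(* At 0 and 1, [derive1 g] also depends on [g] outside [[0,1]], where clamping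
   changes it; a single point is measurable anyway. *)
pose d t := if t == 0 then derive1 g 0 else if t == 1 then derive1 g 1
            else derive_seq (g \o clamp01) t.
have md : measurable_fun setT d.
  have meq c : measurable_fun setT (fun t : R => t == c).
    by apply: measurable_fun_eqr; [exact: measurable_id|exact: measurable_cst].
  apply: measurable_fun_ifT (meq 0) (measurable_cst _) _.
  exact: measurable_fun_ifT (meq 1) (measurable_cst _) (measurable_derive_seq hG).
apply: (eq_measurable_fun d); last exact: measurable_funS md.
move=> t; rewrite inE /= in_itv /= => /andP[t0 t1]; rewrite /d.
case: eqP => [->//|/eqP tn0]; case: eqP => [->//|/eqP tn1].
by rewrite -derive1_seqE // -derive1_clamp01 // !lt_neqAle eq_sym tn0 tn1 t0 t1.
Qed.

End unit_interval.

Section lipschitz_family_measurable.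
Variable R : realType.
Local Notation I01 := (`[0, 1]%classic : set R).
Implicit Types (K : nat) (v : R).

Definition grid (K : nat) (v : R) : R := (Num.truncn (v * K%:R))%:R / K%:R.

Definition in_cell (K : nat) (v : R) (i : nat) : bool :=
  (i%:R <= v * K%:R) && (v * K%:R < i.+1%:R).

Lemma in_cellE K v i : 0 <= v -> in_cell K v i = (i == Num.truncn (v * K%:R)).
Proof. by move=> v0; rewrite /in_cell eq_sym truncn_eq // mulr_ge0. Qed.

Lemma truncn_grid_lt K v : 0 <= v <= 1 -> (Num.truncn (v * K%:R) < K.+1)%N.
Proof.
move=> /andP[v0 v1]; rewrite ltnS truncn_le_nat.
by apply: (le_lt_trans (y := K%:R)); [rewrite -{2}(mul1r K%:R) ler_wpM2r|rewrite ltr_nat].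
Qed.

Lemma grid_ge0_le1 K v : (0 < K)%N -> 0 <= v <= 1 -> 0 <= grid K v <= 1.
Proof.
move=> K0 v01; have KR : 0 < K%:R :> R by rewrite ltr0n.
have := truncn_grid_lt K v01; rewrite ltnS -(@ler_nat R) => kK.
by rewrite /grid divr_ge0 //= ler_pdivrMr // mul1r.
Qed.

Lemma grid_dist K v : (0 < K)%N -> 0 <= v -> `|grid K v - v| <= K%:R^-1.
Proof.
move=> K0 v0; have KR : 0 < K%:R :> R by rewrite ltr0n.
have /andP[kv vk] := truncn_itv (mulr_ge0 v0 (ler0n R K)).
have gv : grid K v <= v by rewrite ler_pdivrMr.
have vg : v - grid K v < K%:R^-1.
  rewrite ltrBlDr (_ : K%:R^-1 + grid K v = (Num.truncn (v * K%:R)).+1%:R / K%:R).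
    by rewrite ltr_pdivlMr.
  by rewrite /grid -natr1 mulrDl mul1r addrC.
by rewrite distrC ger0_norm ?subr_ge0 // ltW.
Qed.

Lemma sum_ord2_if_pred1 (K : nat) (P Q : nat -> bool) (c : nat -> nat -> R) i0 j0 :
  (i0 < K)%N -> (j0 < K)%N -> (forall i, P i = (i == i0)) -> (forall j, Q j = (j == j0)) ->
  \sum_(i < K) \sum_(j < K) (if P i && Q j then c i j else 0) = c i0 j0.
Proof.
move=> i0K j0K Pi0 Qj0; rewrite (bigD1 (Ordinal i0K)) //= [X in _ + X]big1 ?addr0.
  rewrite (bigD1 (Ordinal j0K)) //= [X in _ + X]big1 ?addr0 ?Pi0 ?Qj0 ?eqxx // => j nj.
  by rewrite Qj0 andbC; case: eqP => // ej; case/eqP: nj; exact: val_inj.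
move=> i ni; apply: big1 => j _; rewrite Pi0; case: eqP => // ei.
by case/eqP: ni; exact: val_inj.
Qed.

Variables (C : R -> R -> R -> R) (x y : R -> R).
Hypothesis C_lip : forall t, 0 <= t <= 1 -> forall a b a' b',
  0 <= a <= 1 -> 0 <= b <= 1 -> 0 <= a' <= 1 -> 0 <= b' <= 1 ->
  `|C t a b - C t a' b'| <= `|a - a'| + `|b - b'|.
Hypothesis mC : forall a b : R, 0 <= a <= 1 -> 0 <= b <= 1 -> measurable_fun I01 (fun t => C t a b).
Hypotheses (mx : measurable_fun I01 x) (my : measurable_fun I01 y).
Hypotheses (x01 : forall t, 0 <= t <= 1 -> 0 <= x t <= 1)
  (y01 : forall t, 0 <= t <= 1 -> 0 <= y t <= 1).

(* [C t] evaluated at the grid point below [(x t, y t)], written as a finite sum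
   so that measurability in [t] reduces to that of each [C _ a b]. *)
Definition grid_approx N t := \sum_(i < N.+2) \sum_(j < N.+2)
  (if in_cell N.+1 (x t) i && in_cell N.+1 (y t) j
   then C t (i%:R / N.+1%:R) (j%:R / N.+1%:R) else 0).

Lemma grid_approxE N t : 0 <= t <= 1 ->
  grid_approx N t = C t (grid N.+1 (x t)) (grid N.+1 (y t)).
Proof.
move=> t01; have /andP[xt0 _] := x01 t01; have /andP[yt0 _] := y01 t01.
apply: (sum_ord2_if_pred1 (fun i j => C t (i%:R / N.+1%:R) (j%:R / N.+1%:R))
  (truncn_grid_lt _ (x01 t01)) (truncn_grid_lt _ (y01 t01))) => i; exact: in_cellE.
Qed.

Lemma measurable_grid_approx N : measurable_fun I01 (grid_approx N).
Proof.
have m_cell (z : R -> R) K i : measurable_fun I01 z ->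
    measurable_fun I01 (fun t => in_cell K (z t) i).
  move=> mz; apply: measurable_and.
    by apply: measurable_fun_ler => //; apply: measurable_funM.
  by apply: measurable_fun_ltr => //; apply: measurable_funM.
have grid01 (i : 'I_N.+2) : 0 <= (i%:R / N.+1%:R : R) <= 1.
  by rewrite divr_ge0 //= ler_pdivrMr ?ltr0Sn // mul1r ler_nat -ltnS ltn_ord.
apply: measurable_sum => i; apply: measurable_sum => j.
apply: measurable_fun_if => //; first by apply: measurable_and; exact: m_cell.
by apply: (measurable_funS _ _ (mC (grid01 i) (grid01 j))) => //; exact: measurable_itv.
Qed.

Lemma measurable_lipschitz_family : measurable_fun I01 (fun t => C t (x t) (y t)).
Proof.
apply: (@measurable_fun_cvg _ _ _ _ grid_approx); first exact: measurable_grid_approx.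
move=> t; rewrite /= in_itv /= => t01.
have /andP[xt0 _] := x01 t01; have /andP[yt0 _] := y01 t01.
apply/cvgrPdist_le => e e0.
have /cvgrPdist_lt/(_ (e / 2) (ltac:(by rewrite divr_gt0))) := @cvg_harmonic R.
apply: filterS => N; rewrite sub0r normrN ger0_norm ?harmonic_ge0 // => hN.
rewrite grid_approxE // distrC.
apply: (le_trans (C_lip t01 (grid_ge0_le1 _ (x01 t01)) (grid_ge0_le1 _ (y01 t01))
  (x01 t01) (y01 t01))) => //.
apply: (le_trans (lerD (grid_dist (ltn0Sn N) xt0) (grid_dist (ltn0Sn N) yt0))).
by rewrite [leRHS]splitr; apply: lerD; apply: ltW.
Qed.

End lipschitz_family_measurable.

Section integral_01.
Variable R : realType.
Local Notation mu := (@lebesgue_measure R).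
Local Notation I01 := (`[0, 1]%classic : set R).
Implicit Types (f g : R -> R) (E : set R).

Lemma integral_fin_num_01 f E : measurable E -> E `<=` I01 ->
  measurable_fun I01 f -> (forall t, 0 <= t <= 1 -> 0 <= f t <= 1) ->
  (\int[mu]_(t in E) (f t)%:E)%E \is a fin_num.
Proof.
move=> mE EI mf f01; have fE t : E t -> 0 <= f t <= 1.
  by move=> /EI; rewrite /= in_itv; exact: f01.
rewrite ge0_fin_numE; last by apply: integral_ge0 => t /fE /andP[? ?]; rewrite lee_fin.
apply: (@le_lt_trans _ _ (\int[mu]_(t in E) (cst 1%:E t))%E).
  apply: ge0_le_integral => //.
  - by move=> t /fE /andP[? ?]; rewrite lee_fin.
  - by apply/measurable_EFinP; exact: measurable_funS mf.
  - by move=> t /fE /andP[? ?]; rewrite lee_fin.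
rewrite integral_cst // mul1e (@le_lt_trans _ _ (mu I01)) //.
  by apply: le_measure => //; rewrite inE.
by rewrite lebesgue_measure_itv /= lte01 EFinN sube0 ltry.
Qed.

Lemma le_integral_01 f g E : measurable E -> E `<=` I01 ->
  measurable_fun I01 f -> measurable_fun I01 g ->
  (forall t, 0 <= t <= 1 -> 0 <= f t <= g t) ->
  (\int[mu]_(t in E) (f t)%:E <= \int[mu]_(t in E) (g t)%:E)%E.
Proof.
move=> mE EI mf mg fg; have fgE t : E t -> 0 <= f t <= g t.
  by move=> /EI; rewrite /= in_itv; exact: fg.
apply: ge0_le_integral => //.
- by move=> t /fgE /andP[? ?]; rewrite lee_fin.
- by apply/measurable_EFinP; exact: measurable_funS mf.
- by apply/measurable_EFinP; exact: measurable_funS mg.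
- by move=> t /fgE /andP[? ?]; rewrite lee_fin.
Qed.

Lemma integral_01_split f (c : R) : 0 <= c <= 1 ->
  measurable_fun I01 f -> (forall t, 0 <= t <= 1 -> 0 <= f t) ->
  (\int[mu]_(t in I01) (f t)%:E =
   \int[mu]_(t in `[0%R, c]) (f t)%:E + \int[mu]_(t in `]c, 1%R]) (f t)%:E)%E.
Proof.
move=> /andP[c0 c1] mf f0.
have I01E : I01 = `[0, c]%classic `|` `]c, 1]%classic.
  by apply: itv_bndbnd_setU; rewrite bnd_simp.
rewrite I01E; apply: ge0_integral_setU => //.
- by rewrite -I01E; apply/measurable_EFinP.
- by rewrite -I01E => t; rewrite /= in_itv /= => /f0; rewrite lee_fin.
- apply/disj_setPS => t [] /=; rewrite !in_itv /= => /andP[_ tc] /andP[ct _].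
  by move: (lt_le_trans ct tc); rewrite ltxx.
Qed.

End integral_01.

Section star_product.
Variable R : realType.
Local Notation mu := (@lebesgue_measure R).
Local Notation I01 := (`[0, 1]%classic : set R).
Variables (A B : R -> R -> R).
Hypotheses (hA : is_copula2 A) (hB : is_copula2 B).

Lemma d2_ge0_le1 a t : 0 <= a <= 1 -> 0 <= t <= 1 -> 0 <= d2 A a t <= 1.
Proof. by move=> a01; apply: derive1_ge0_le1 => s u *; exact: copula2_incr_r. Qed.

Lemma d1_ge0_le1 b t : 0 <= b <= 1 -> 0 <= t <= 1 -> 0 <= d1 B t b <= 1.
Proof. by move=> b01; apply: derive1_ge0_le1 => s u *; exact: copula2_incr_l. Qed.

Lemma measurable_d2 a : 0 <= a <= 1 -> measurable_fun I01 (d2 A a).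
Proof. by move=> a01; apply: measurable_derive1_01 => s u *; exact: copula2_incr_r. Qed.

Lemma measurable_d1 b : 0 <= b <= 1 -> measurable_fun I01 (fun t => d1 B t b).
Proof. by move=> b01; apply: measurable_derive1_01 => s u *; exact: copula2_incr_l. Qed.

Lemma d2_1_eq01 t : 0 <= t <= 1 -> d2 A 1 t = 0 \/ d2 A 1 t = 1.
Proof. by apply: derive1_id_01 => s /hA.1[_ [_ [_ ->]]]. Qed.

Lemma d1_1_eq01 t : 0 <= t <= 1 -> d1 B t 1 = 0 \/ d1 B t 1 = 1.
Proof. by apply: derive1_id_01 => s /hB.1[_ [_ [->]]]. Qed.

Definition copula_family (K : R -> R -> R -> R) :=
  (forall t, 0 <= t <= 1 -> is_copula2 (K t)) /\
  (forall x y, 0 <= x <= 1 -> 0 <= y <= 1 -> measurable_fun I01 (fun t => K t x y)).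

Definition star_integral K (E : set R) a b :=
  fine (\int[mu]_(t in E) (K t (d2 A a t) (d1 B t b))%:E)%E.

Section copula_family.
Variable K : R -> R -> R -> R.
Hypothesis hK : copula_family K.

Lemma star_integrand_ge0_le1 a b t : 0 <= a <= 1 -> 0 <= b <= 1 -> 0 <= t <= 1 ->
  0 <= K t (d2 A a t) (d1 B t b) <= 1.
Proof.
move=> a01 b01 t01; apply: (copula2_ge0_le1 ((proj1 hK) t t01)).
  exact: d2_ge0_le1.
exact: d1_ge0_le1.
Qed.

Lemma measurable_star_integrand a b : 0 <= a <= 1 -> 0 <= b <= 1 ->
  measurable_fun I01 (fun t => K t (d2 A a t) (d1 B t b)).
Proof.
move=> a01 b01; apply: measurable_lipschitz_family.
- by move=> t t01; exact: copula2_lipschitz ((proj1 hK) t t01).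
- exact: (proj2 hK).
- exact: measurable_d2.
- exact: measurable_d1.
- by move=> t; exact: d2_ge0_le1.
- by move=> t; exact: d1_ge0_le1.
Qed.

Lemma star_integral_fin_num a b E : 0 <= a <= 1 -> 0 <= b <= 1 ->
  measurable E -> E `<=` I01 ->
  (\int[mu]_(t in E) (K t (d2 A a t) (d1 B t b))%:E)%E \is a fin_num.
Proof.
move=> a01 b01 mE EI; apply: integral_fin_num_01 => //.
  exact: measurable_star_integrand.
by move=> t; exact: star_integrand_ge0_le1.
Qed.

Lemma star_prod_split a b c : 0 <= a <= 1 -> 0 <= b <= 1 -> 0 <= c <= 1 ->
  star_prod K A B a 1 b = star_prod K A B a c b + star_integral K `]c, 1] a b.
Proof.
move=> a01 b01 /[dup] c01 /andP[c0 c1].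
rewrite /star_prod /star_integral (@integral_01_split _ _ c) //.
- rewrite fineD //; apply: star_integral_fin_num => //; apply: subset_itvScc;
    by rewrite bnd_simp.
- exact: measurable_star_integrand.
- by move=> t t01; case/andP: (star_integrand_ge0_le1 a01 b01 t01).
Qed.

End copula_family.

Lemma star_integral_le C C' E a b : copula_family C -> copula_family C' ->
  (forall t, 0 <= t <= 1 -> copula2_le (C t) (C' t)) ->
  0 <= a <= 1 -> 0 <= b <= 1 -> measurable E -> E `<=` I01 ->
  star_integral C E a b <= star_integral C' E a b.
Proof.
move=> hC hC' CC' a01 b01 mE EI.
apply: fine_le; try exact: star_integral_fin_num.
apply: le_integral_01 => //; try exact: measurable_star_integrand.
move=> t t01; case/andP: (star_integrand_ge0_le1 hC a01 b01 t01) => -> _ /=.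
by apply: CC' => //; [exact: d2_ge0_le1|exact: d1_ge0_le1].
Qed.

Lemma star_prod_r1 K a u : copula_family K -> 0 <= a <= 1 -> 0 <= u <= 1 ->
  star_prod K A B a u 1 = fine (\int[mu]_(t in `[0%R, u]) (d2 A a t * d1 B t 1)%:E)%E.
Proof.
move=> hK a01 /andP[_ u1]; rewrite /star_prod; congr fine; apply: eq_integral => t.
rewrite inE /= in_itv /= => /andP[t0 tu]; have t01 : 0 <= t <= 1 by rewrite t0 (le_trans tu).
by rewrite copula2_r01 //; [exact: (proj1 hK)|exact: d2_ge0_le1|exact: d1_1_eq01].
Qed.

Lemma star_prod_l1 K u b : copula_family K -> 0 <= b <= 1 -> 0 <= u <= 1 ->
  star_prod K A B 1 u b = fine (\int[mu]_(t in `[0%R, u]) (d2 A 1 t * d1 B t b)%:E)%E.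
Proof.
move=> hK b01 /andP[_ u1]; rewrite /star_prod; congr fine; apply: eq_integral => t.
rewrite inE /= in_itv /= => /andP[t0 tu]; have t01 : 0 <= t <= 1 by rewrite t0 (le_trans tu).
by rewrite copula2_l01 //; [exact: (proj1 hK)|exact: d1_ge0_le1|exact: d2_1_eq01].
Qed.

End star_product.

Unset Implicit Arguments.

Theorem proposition3p4 (R : realType) (C C' : R -> R -> R -> R) :
  (forall t, 0 <= t <= 1 -> is_copula2 (C t)) ->
  (forall t, 0 <= t <= 1 -> is_copula2 (C' t)) ->
  (forall x y : R, 0 <= x <= 1 -> 0 <= y <= 1 ->
     measurable_fun (`[0, 1] : set R) (fun t => C t x y)) ->
  (forall x y : R, 0 <= x <= 1 -> 0 <= y <= 1 ->
     measurable_fun (`[0, 1] : set R) (fun t => C' t x y)) ->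
  (forall t, 0 <= t <= 1 -> copula2_le (C t) (C' t)) ->
  forall A B : R -> R -> R, is_copula2 A -> is_copula2 B ->
    copula3_le (star_prod C A B) (star_prod C' A B).
Proof.
move=> hC hC' mC mC' CC' A B hA hB u1 u2 u3 u1_01 u2_01 u3_01.
have fC : copula_family C by split.
have fC' : copula_family C' by split.
have le_star (E : set R) : measurable E -> E `<=` `[0, 1] ->
    star_integral A B C E u1 u3 <= star_integral A B C' E u1 u3.
  by move=> mE EI; exact: star_integral_le.
have [u2_0 u2_1] := andP u2_01.
split; first by apply: le_star => //; apply: subset_itvScc; rewrite bnd_simp.
rewrite /survival3 !(star_prod_r1 hA hB fC, star_prod_r1 hA hB fC') //.
rewrite !(star_prod_l1 hA hB fC, star_prod_l1 hA hB fC') //.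
rewrite (star_prod_split hA hB fC u1_01 u3_01 u2_01).
rewrite (star_prod_split hA hB fC' u1_01 u3_01 u2_01).
have := le_star _ (measurable_itv `]u2, 1]) (subset_itvScc _ _); rewrite !bnd_simp.
lra.
Qed.
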